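(* Let $K$ be an infinite commutative domain of characteristic $p>0$ and let $R$ be an associative (not necessarily unital) $K$-algebra on which $K$ acts torsion-freely. Then the following are equivalent. (i) $(R,\cdot)$ satisfies a semigroup identity; (ii) $R$ satisfies a binomial identity; (iii) there exist $n\ge0$ and $\alpha_0,\dots,\alpha_n\in K$, not all zero, such that $\sum_{i=0}^n\alpha_i y^ixy^{n-i}=0$ for all $x,y\in R$; (iv) there exists $m\ge1$ such that $y^m e_m y^m=0$ for all $x,y\in R$.
   Context: A semigroup identity is $u=v$ where $u\ne v$ are words in the free semigroup on variables $x,y,x_3,\dots$, holding under all substitutions. A binomial identity is a nontrivial polynomial identity $\alpha_1u_1+\alpha_2u_2=0$ with $u_1,u_2$ monomials and $\alpha_1,\alpha_2\in K$. $[a,b]=ab-ba$, $e_1=[x,y]$, $e_{m+1}=[e_m,y]$. *)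

From HB Require Import structures.
From mathcomp Require Import all_boot all_order all_algebra.
Set Implicit Arguments. Unset Strict Implicit. Unset Printing Implicit Defensive.
Import GRing.Theory.
Local Open Scope ring_scope.

Definition nu_assoc_alg (K : pzRingType) (R : lmodType K) (mul : R -> R -> R) : Prop :=
  [/\ (forall x y z, mul x (mul y z) = mul (mul x y) z),
      (forall x y z, mul (x + y) z = mul x z + mul y z),
      (forall x y z, mul x (y + z) = mul x y + mul x z),
      (forall (a : K) x y, a *: mul x y = mul (a *: x) y)
    & (forall (a : K) x y, a *: mul x y = mul x (a *: y))].

Definition torsion_free (K : pzRingType) (R : lmodType K) : Prop :=
  forall (a : K) (x : R), a *: x = 0 -> a = 0 \/ x = 0.

Definition infinite_type (T : eqType) : Prop := forall s : seq T, exists x, x \notin s.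

Section Words.
Variables (K : pzRingType) (R : lmodType K) (mul : R -> R -> R).

(* A word in the free semigroup on variables indexed by nat is a nonempty seq nat;
   [evalw f w] is its value under the substitution f. *)
Definition evalw (f : nat -> R) (w : seq nat) : R :=
  if w is a :: t then foldl (fun acc i => mul acc (f i)) (f a) t else 0.

Definition semigroup_identity : Prop :=
  exists u v : seq nat, [/\ u != [::], v != [::], u != v &
    forall f : nat -> R, evalw f u = evalw f v].

(* the polynomial a1 u1 + a2 u2 of the free (non-unital) algebra is nonzero *)
Definition binomial_nontrivial (a1 a2 : K) (u1 u2 : seq nat) : bool :=
  if u1 == u2 then a1 + a2 != 0 else (a1 != 0) || (a2 != 0).

Definition binomial_identity : Prop :=
  exists (a1 a2 : K) (u1 u2 : seq nat),
    [/\ u1 != [::], u2 != [::], binomial_nontrivial a1 a2 u1 u2 &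
      forall f : nat -> R, a1 *: evalw f u1 + a2 *: evalw f u2 = 0].

Definition xy_subst (x y : R) : nat -> R := fun i => if i == 0%N then x else y.

Definition yxy (x y : R) (n i : nat) : R :=
  evalw (xy_subst x y) (nseq i 1%N ++ 0%N :: nseq (n - i) 1%N).

Definition comm (a b : R) : R := mul a b - mul b a.

Fixpoint e_ (x y : R) (m : nat) : R :=
  if m is k.+1 then comm (e_ x y k) y else x.

(* y^m for m >= 1 *)
Definition pw (y : R) (m : nat) : R := iter m.-1 (fun z => mul z y) y.

End Words.

From HB Require Import structures.
From mathcomp Require Import all_boot all_order all_algebra.
From mathcomp Require Import ring zify.
Set Implicit Arguments. Unset Strict Implicit. Unset Printing Implicit Defensive.
Import GRing.Theory.
Local Open Scope ring_scope.

(* (i) => (ii) is immediate.  (ii) => (iii): substitute y + l x for one variable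
   and y for all the others.  As K is infinite and acts torsion-freely, each
   coefficient of the resulting polynomial in l vanishes identically, and the
   coefficient of l is a combination of the words y^j x y^(n-j).  Rescaling y
   separates the two words of the binomial when their lengths differ; when they
   agree, a position where they differ (or any position, if they are equal)
   yields a nonzero coefficient.
   (iii) => (iv): let e be the largest index with alpha_e <> 0 and q = p^r > n.
   Multiply on the right by a power of y to reach total degree e + q - 1,
   substitute y + l y^2 for y and take the coefficient of l^e.  Since
   C(q - 1 + c, b) = 0 for 0 < c <= b < q and C(q - 1, b) = (-1)^b in
   characteristic p, only alpha_e (-1)^e y^e e_e y^(q-1) survives, and vanishing
   of y^a e_m y^b propagates to larger a, m, b.
   (iv) => (i): for q = p^m the binomial expansion of e_q collapses to
   x y^q - y^q x, so y^q e_q y^q = 0 is the semigroup identity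
   y^q x y^(2q) = y^(2q) x y^q. *)

Lemma sum_ord_widen (V : nmodType) (F : nat -> V) n N : (n <= N)%N ->
  (forall k, (n <= k < N)%N -> F k = 0) -> \sum_(k < n) F k = \sum_(k < N) F k.
Proof.
move=> nN F0; rewrite (big_ord_widen N F) // big_mkcond; apply: eq_bigr => k _.
by case: ltnP => // nk; rewrite F0 // nk ltn_ord.
Qed.

Lemma sum_diag (V : nmodType) (F : nat -> nat -> V) N e : (e < N)%N ->
  \sum_(a < N) \sum_(b < N | (a + b == e)%N) F a b = \sum_(a < e.+1) F a (e - a)%N.
Proof.
move=> eN; rewrite (big_ord_widen N (fun a => F a (e - a)%N)) // [RHS]big_mkcond.
apply: eq_bigr => a _; rewrite ltnS; case: leqP => [ae | ea].
  rewrite (eq_bigl (fun b : 'I_N => nat_of_ord b == (e - a)%N)); last first.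
    by move=> b; apply/eqP/eqP; lia.
  by rewrite (big_ord1_eq _ (F a)) ifT //; lia.
by rewrite big_pred0 // => b; apply/eqP; lia.
Qed.

Section NonUnitalAlgebra.
Variables (K : pzRingType) (R : lmodType K) (mul : R -> R -> R).
Hypothesis Hmul : nu_assoc_alg mul.

Lemma mulmA x y z : mul x (mul y z) = mul (mul x y) z.
Proof. by case: Hmul. Qed.

Lemma mulmDl x y z : mul (x + y) z = mul x z + mul y z.
Proof. by case: Hmul. Qed.

Lemma mulmDr x y z : mul x (y + z) = mul x y + mul x z.
Proof. by case: Hmul. Qed.

Lemma mulmZl (a : K) x y : mul (a *: x) y = a *: mul x y.
Proof. by case: Hmul => _ _ _ ->. Qed.

Lemma mulmZr (a : K) x y : mul x (a *: y) = a *: mul x y.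
Proof. by case: Hmul => _ _ _ _ ->. Qed.

Lemma mul0m x : mul 0 x = 0.
Proof. by have := mulmZl 0 0 x; rewrite !scale0r. Qed.

Lemma mulm0 x : mul x 0 = 0.
Proof. by have := mulmZr 0 x 0; rewrite !scale0r. Qed.

Lemma mulm_suml I (r : seq I) (P : pred I) (F : I -> R) z :
  mul (\sum_(i <- r | P i) F i) z = \sum_(i <- r | P i) mul (F i) z.
Proof. exact: (big_morph (fun v => mul v z) (fun u v => mulmDl u v z) (mul0m z)). Qed.

Lemma mulm_sumr I (r : seq I) (P : pred I) (F : I -> R) z :
  mul z (\sum_(i <- r | P i) F i) = \sum_(i <- r | P i) mul z (F i).
Proof. exact: (big_morph (mul z) (mulmDr z) (mulm0 z)). Qed.

(* y^k v and v y^k; unlike [pw] these make sense for k = 0 although R need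
   not have a unit. *)
Definition lpow (y : R) (k : nat) (v : R) : R := iter k (mul y) v.
Definition rpow (y : R) (k : nat) (v : R) : R := iter k (mul^~ y) v.
#[global] Arguments lpow : simpl never.
#[global] Arguments rpow : simpl never.

Lemma lpow_is_linear y k : linear (lpow y k).
Proof.
move=> a u v; elim: k => // k IH.
by rewrite /lpow /= -!/(lpow _ _ _) IH mulmDr mulmZr.
Qed.

Lemma rpow_is_linear y k : linear (rpow y k).
Proof.
move=> a u v; elim: k => // k IH.
by rewrite /rpow /= -!/(rpow _ _ _) IH mulmDl mulmZl.
Qed.

HB.instance Definition _ y k :=
  GRing.isLinear.Build K R R *:%R (lpow y k) (lpow_is_linear y k).
HB.instance Definition _ y k :=
  GRing.isLinear.Build K R R *:%R (rpow y k) (rpow_is_linear y k).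

Lemma lpowS y k v : lpow y k.+1 v = mul y (lpow y k v). Proof. by []. Qed.
Lemma rpowS y k v : rpow y k.+1 v = mul (rpow y k v) y. Proof. by []. Qed.

Lemma lpowSr y k v : lpow y k.+1 v = lpow y k (mul y v).
Proof. by rewrite /lpow iterSr. Qed.

Lemma rpowSr y k v : rpow y k.+1 v = rpow y k (mul v y).
Proof. by rewrite /rpow iterSr. Qed.

Lemma lpowD y i j v : lpow y (i + j) v = lpow y i (lpow y j v).
Proof. by rewrite /lpow iterD. Qed.

Lemma rpowD y i j v : rpow y (i + j) v = rpow y i (rpow y j v).
Proof. by rewrite /rpow iterD. Qed.

Lemma lpow_rpow y i j v : lpow y i (rpow y j v) = rpow y j (lpow y i v).
Proof.
elim: i v => [|i IH] v //; rewrite !lpowS IH; move: (lpow y i v) => u.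
by elim: j {IH} => [|j IHj] //; rewrite !rpowS mulmA IHj.
Qed.

Lemma rpow_lpow_self y k : rpow y k y = lpow y k y.
Proof. by elim: k => // k IH; rewrite rpowS IH -[mul _ y]/(rpow y 1 _) -lpow_rpow lpowSr. Qed.

Lemma mul_lpow_self y k v : mul (lpow y k y) v = lpow y k.+1 v.
Proof.
rewrite lpowSr; elim: k v => // k IH v.
by rewrite lpowS -mulmA IH -lpowS -lpowSr lpowS.
Qed.

Lemma mul_rpow_self y k v : mul v (rpow y k y) = rpow y k.+1 v.
Proof.
rewrite rpowSr; elim: k v => // k IH v.
by rewrite rpowS mulmA IH -rpowS -rpowSr rpowS.
Qed.

Lemma mul_pw_l y m v : (0 < m)%N -> mul (pw mul y m) v = lpow y m v.
Proof. by case: m => // m _; rewrite /pw -/(rpow _ _ _) rpow_lpow_self mul_lpow_self. Qed.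

Lemma mul_pw_r y m v : (0 < m)%N -> mul v (pw mul y m) = rpow y m v.
Proof. by case: m => // m _; rewrite /pw -/(rpow _ _ _) mul_rpow_self. Qed.

Lemma lpow_scale (c : K) y k v : lpow (c *: y) k v = c ^+ k *: lpow y k v.
Proof.
elim: k => [|k IH]; first by rewrite expr0 scale1r.
by rewrite !lpowS IH mulmZl mulmZr scalerA exprS.
Qed.

Lemma rpow_scale (c : K) y k v : rpow (c *: y) k v = c ^+ k *: rpow y k v.
Proof.
elim: k => [|k IH]; first by rewrite expr0 scale1r.
by rewrite !rpowS IH mulmZl mulmZr scalerA exprSr.
Qed.

Definition sandwich (x y : R) (i j : nat) : R := rpow y j (lpow y i x).
#[global] Arguments sandwich : simpl never.

Lemma sandwichZ (c : K) x y i j : sandwich (c *: x) y i j = c *: sandwich x y i j.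
Proof. by rewrite /sandwich !linearZ. Qed.

Lemma sandwich_scale (c : K) x y i j :
  sandwich x (c *: y) i j = c ^+ (i + j) *: sandwich x y i j.
Proof. by rewrite /sandwich rpow_scale lpow_scale linearZ scalerA -exprD addnC. Qed.

Lemma sandwich_mul x y i j : mul (sandwich x y i j) y = sandwich x y i j.+1.
Proof. by []. Qed.

Lemma mul_sandwich x y i j : mul y (sandwich x y i j) = sandwich x y i.+1 j.
Proof. by rewrite /sandwich -[mul y _]/(lpow y 1 _) lpow_rpow -lpowD. Qed.

Lemma rpow_lpow_sandwich x y a b i j :
  rpow y b (lpow y a (sandwich x y i j)) = sandwich x y (a + i) (b + j).
Proof. by rewrite /sandwich lpow_rpow -rpowD -lpowD. Qed.

Lemma foldl_mul_nseq (f : nat -> R) a j z :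
  foldl (fun acc i => mul acc (f i)) z (nseq j a) = rpow (f a) j z.
Proof. by elim: j z => // j IH z; rewrite rpowSr -IH. Qed.

Lemma evalw_nseq (f : nat -> R) a b i j :
  evalw mul f (nseq i a ++ b :: nseq j a) = sandwich (f b) (f a) i j.
Proof.
case: i => [|i] /=; first by rewrite foldl_mul_nseq.
rewrite foldl_cat !foldl_mul_nseq /= foldl_mul_nseq /sandwich.
by rewrite rpow_lpow_self mul_lpow_self.
Qed.

Lemma yxyE x y n i : yxy mul x y n i = sandwich x y i (n - i).
Proof. exact: evalw_nseq. Qed.

Lemma e_expand x y m : e_ mul x y m =
  \sum_(k < m.+1) ((-1) ^+ k * 'C(m, k)%:R) *: sandwich x y k (m - k).
Proof.
elim: m => [|m IH]; first by rewrite big_ord1 /= mul1r scale1r.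
rewrite /= /comm IH mulm_suml mulm_sumr /=.
under eq_bigr do rewrite mulmZl sandwich_mul.
under [X in _ - X]eq_bigr do rewrite mulmZr mul_sandwich.
rewrite [in RHS]big_ord_recl /= expr0 mul1r bin0 scale1r ?subn0.
under [X in _ = _ + X]eq_bigr do
  rewrite /bump /= binS natrD mulrDr scalerDl.
rewrite big_split /= addrA; congr (_ + _).
  rewrite [in RHS]big_ord_recr /= bin_small // mulr0 scale0r addr0.
  rewrite big_ord_recl /= expr0 mul1r bin0 scale1r subn0; congr (_ + _).
  apply: eq_bigr => k _; congr (_ *: sandwich _ _ _ _).
  by rewrite /bump /=; have := ltn_ord k; lia.
rewrite -sumrN; apply: eq_bigr => k _.
by rewrite exprS mulN1r mulNr scaleNr.
Qed.

Lemma rpow_lpow_e x y a b m : rpow y b (lpow y a (e_ mul x y m)) =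
  \sum_(k < m.+1) ((-1) ^+ k * 'C(m, k)%:R) *: sandwich x y (a + k) (b + (m - k)).
Proof.
rewrite e_expand !raddf_sum /=; apply: eq_bigr => k _.
by rewrite !linearZ /= rpow_lpow_sandwich.
Qed.

End NonUnitalAlgebra.


Section PcharBinomial.
Variables (K : comNzRingType) (p : nat).
Hypothesis pcharKp : p \in [pchar K].

Let p_prime : prime p := pcharf_prime pcharKp.

Lemma pchar_expn_gt0 r : (0 < p ^ r)%N.
Proof. by rewrite expn_gt0 prime_gt0. Qed.

Lemma ltn_pchar_expn r : (r < p ^ r)%N.
Proof. exact/ltn_expl/prime_gt1. Qed.

Lemma pchar_nat_expn (S : comNzRingType) r : p \in [pchar S] -> [pchar S].-nat (p ^ r)%N.
Proof. by move=> pcharSp; rewrite pnatX (pnatE _ p_prime) pcharSp. Qed.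

Lemma binomial_pchar_expn_eq0 r k :
  (0 < k < p ^ r)%N -> ('C(p ^ r, k)%:R : K) = 0.
Proof.
move=> /andP [k_gt0 k_lt].
have pcharXp : p \in [pchar {poly K}] by rewrite pchar_poly.
have := congr1 (fun q : {poly K} => q`_k) (exprDn_pchar 1 'X (pchar_nat_expn r pcharXp)).
rewrite exprDn coef_sum expr1n coefD coefC coefXn (gtn_eqF k_gt0) (ltn_eqF k_lt) addr0.
move=> <-; rewrite (eq_bigr (fun i : 'I_(p ^ r).+1 =>
  if nat_of_ord i == k then ('C(p ^ r, i)%:R : K) else 0)); last first.
  by move=> i _; rewrite expr1n mul1r coefMn coefXn eq_sym; case: eqP; rewrite ?mul0rn.
by rewrite -big_mkcond (big_ord1_eq _ (fun i => 'C(p ^ r, i)%:R)) ltnS ltnW.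
Qed.

Lemma sign_pchar_expn r : (-1 : K) ^+ (p ^ r)%N = -1.
Proof.
have := exprDn_pchar 1 (-1 : K) (pchar_nat_expn r pcharKp).
rewrite subrr expr0n (gtn_eqF (pchar_expn_gt0 r)) expr1n.
by move/esym/eqP; rewrite addrC addr_eq0 => /eqP.
Qed.

Lemma binomial_pchar_predn_expn r b :
  (b < p ^ r)%N -> ('C((p ^ r).-1, b)%:R : K) = (-1) ^+ b.
Proof.
elim: b => [|b IH] b_lt; first by rewrite bin0 expr0.
have /eqP := @binomial_pchar_expn_eq0 r b.+1 b_lt.
rewrite -{1}(prednK (pchar_expn_gt0 r)) binS natrD IH ?(ltnW b_lt) // addr_eq0 => /eqP ->.
by rewrite exprS mulN1r.
Qed.

Lemma binomial_pchar_prednD_expn_eq0 r c b :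
  (0 < c <= b)%N -> (b < p ^ r)%N -> ('C((p ^ r).-1 + c, b)%:R : K) = 0.
Proof.
elim: c b => [|c IH] [|b] //= cb b_lt.
case: c IH cb => [|c] IH cb.
  by rewrite addn1 prednK ?pchar_expn_gt0 // binomial_pchar_expn_eq0.
by rewrite addnS binS natrD !IH ?addr0 //; lia.
Qed.

End PcharBinomial.

Section ScalarPolynomials.
Variables (K : comPzRingType) (R : lmodType K).

Definition peval (N : nat) (c : nat -> R) (l : K) : R := \sum_(k < N) l ^+ k *: c k.

Definition vanish_from (N : nat) (c : nat -> R) : Prop := forall k, (N <= k)%N -> c k = 0.

Lemma peval_widen N M c l : vanish_from N c -> (N <= M)%N -> peval N c l = peval M c l.
Proof.
move=> c0 NM; rewrite /peval -(subnKC NM) big_split_ord /= [X in _ = _ + X]big1 ?addr0 //.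
by move=> k _; rewrite c0 ?scaler0 // leq_addr.
Qed.

Lemma pevalD N (c1 c2 : nat -> R) l :
  peval N (fun k => c1 k + c2 k) l = peval N c1 l + peval N c2 l.
Proof. by rewrite /peval -big_split; apply: eq_bigr => k _; rewrite scalerDr. Qed.

Lemma pevalZ N (c : nat -> R) (a : K) l : peval N (fun k => a *: c k) l = a *: peval N c l.
Proof. by rewrite /peval scaler_sumr; apply: eq_bigr => k _; rewrite !scalerA mulrC. Qed.

Lemma peval_monomial N m (v : R) l :
  (m < N)%N -> peval N (fun k => (k == m)%:R *: v) l = l ^+ m *: v.
Proof.
move=> mN; rewrite /peval (eq_bigr (fun k : 'I_N =>
  if nat_of_ord k == m then l ^+ k *: v else 0)).
  by rewrite -big_mkcond (big_ord1_eq _ (fun k => l ^+ k *: v)) mN.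
by move=> k _; case: eqP; rewrite ?scale1r ?scale0r ?scaler0.
Qed.

End ScalarPolynomials.

Section InfiniteDomain.
Variables (K : idomainType) (R : lmodType K).
Hypothesis K_infinite : infinite_type K.
Hypothesis R_torsion_free : torsion_free R.

Lemma uniq_seq_of_size N : exists s : seq K, uniq s /\ size s = N.
Proof.
elim: N => [|N [s [s_uniq s_size]]]; first by exists [::].
by have [z zs] := K_infinite s; exists (z :: s); rewrite /= zs s_uniq s_size.
Qed.

(* Evaluate at N distinct points: the Vandermonde matrix is invertible, and the
   adjugate recovers every coefficient up to the factor det, which acts
   injectively. *)
Lemma peval_eq0_coef N (c : nat -> R) :
  (forall l, peval N c l = 0) -> forall k, (k < N)%N -> c k = 0.
Proof.
move=> c_root k kN.
have [s [s_uniq s_size]] := uniq_seq_of_size N.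
pose A : 'M[K]_N := (Vandermonde N (\row_j s`_j))^T.
have detA_neq0 : \det A != 0.
  rewrite det_tr det_Vandermonde; apply/prodf_neq0 => i _; apply/prodf_neq0 => j ij.
  rewrite !mxE subr_eq0; apply/negP => /eqP /(congr1 (index^~ s)).
  by rewrite !index_uniq ?s_size // => /val_inj eji; move: ij; rewrite eji ltnn.
have A_c : forall i : 'I_N, \sum_(j < N) A i j *: c j = 0.
  by move=> i; rewrite -[RHS](c_root s`_i) /peval; apply: eq_bigr => j _; rewrite !mxE.
have : \sum_(j < N) (\adj A *m A) (Ordinal kN) j *: c j = 0.
  under eq_bigr do rewrite mxE scaler_suml.
  rewrite exchange_big /=; apply: big1 => i _.
  by under eq_bigr do rewrite -scalerA; rewrite -scaler_sumr A_c scaler0.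
rewrite mul_adj_mx (eq_bigr (fun j : 'I_N => if nat_of_ord j == k then \det A *: c j else 0)).
  rewrite -big_mkcond (big_ord1_eq _ (fun j => \det A *: c j)) kN.
  by case/R_torsion_free => // detA0; rewrite detA0 eqxx in detA_neq0.
move=> j _; rewrite !mxE -val_eqE /= eq_sym.
by case: eqP; rewrite ?mulr1n ?mulr0n ?scale0r.
Qed.

Lemma peval2_eq0_diag N (c : nat -> nat -> R) :
  (forall l : K, \sum_(a < N) \sum_(b < N) l ^+ (a + b) *: c a b = 0) ->
  forall e, (e < N)%N -> \sum_(a < e.+1) c a (e - a)%N = 0.
Proof.
move=> c_root e eN; rewrite -(sum_diag _ eN).
pose C k := \sum_(a < N) \sum_(b < N | (a + b == k)%N) c a b.
apply: (@peval_eq0_coef (N + N) C) => [l|]; last by rewrite ltn_addr.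
rewrite -[RHS](c_root l) /peval /C.
under eq_bigr do rewrite scaler_sumr.
rewrite exchange_big /=; apply: eq_bigr => a _.
under eq_bigr do rewrite big_mkcond scaler_sumr.
rewrite exchange_big /=; apply: eq_bigr => b _.
rewrite (eq_bigr (fun k : 'I_(N + N) =>
  if nat_of_ord k == (a + b)%N then l ^+ k *: c a b else 0)); last first.
  by move=> k _; rewrite eq_sym; case: eqP => [->|]; rewrite ?scaler0.
rewrite -big_mkcond (big_ord1_eq _ (fun k => l ^+ k *: c a b)) ifT //.
by have := ltn_ord a; have := ltn_ord b; lia.
Qed.

End InfiniteDomain.

Section Linearization.
Variables (K : comPzRingType) (R : lmodType K) (mul : R -> R -> R).
Hypothesis Hmul : nu_assoc_alg mul.
Variables (y : R) (v : nat -> R).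

Definition lin_subst (l : K) (i : nat) : R := y + l *: v i.

(* coefficients of [peval N c l * lin_subst l i], as a polynomial in l *)
Definition coefs_mulr (c : nat -> R) (i : nat) : nat -> R :=
  fun k => mul (c k) y + (if k is k'.+1 then mul (c k') (v i) else 0).

Definition lin_coefs (w : seq nat) : nat -> R :=
  if w is h :: t then
    foldl coefs_mulr (fun k => if k == 0%N then y else if k == 1%N then v h else 0) t
  else fun _ => 0.

Definition lin_part (w : seq nat) : R :=
  \sum_(j < size w) sandwich mul (v (nth 0%N w j)) y j ((size w).-1 - j).

Lemma peval_coefs_mulr c N l i : vanish_from N c ->
  mul (peval N c l) (lin_subst l i) = peval N.+1 (coefs_mulr c i) l.
Proof.
move=> c0.
have mul_y : \sum_(k < N.+1) l ^+ k *: mul (c k) y = mul (peval N c l) y.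
  rewrite big_ord_recr /= c0 // (mul0m Hmul) scaler0 addr0 /peval (mulm_suml Hmul).
  by apply: eq_bigr => k _; rewrite (mulmZl Hmul).
have mul_v : \sum_(k < N.+1) l ^+ k *: (if nat_of_ord k is k'.+1 then mul (c k') (v i) else 0)
    = l *: mul (peval N c l) (v i).
  rewrite big_ord_recl /= scaler0 add0r /peval (mulm_suml Hmul) scaler_sumr.
  by apply: eq_bigr => k _; rewrite (mulmZl Hmul) scalerA exprS.
rewrite [RHS]/peval /coefs_mulr; under eq_bigr do rewrite scalerDr.
by rewrite big_split /= mul_y mul_v (mulmDr Hmul) (mulmZr Hmul).
Qed.

Lemma coefs_mulr_vanish c N i : vanish_from N c -> vanish_from N.+1 (coefs_mulr c i).
Proof. by move=> c0 [|k] Nk //; rewrite /coefs_mulr !c0 ?(mul0m Hmul) ?addr0 // ltnW. Qed.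

Lemma foldl_coefs_mulr l t c N : vanish_from N c ->
  foldl (fun acc i => mul acc (lin_subst l i)) (peval N c l) t
    = peval (N + size t) (foldl coefs_mulr c t) l /\
  vanish_from (N + size t) (foldl coefs_mulr c t).
Proof.
elim: t c N => [|i t IH] c N c0 /=; first by rewrite addn0.
rewrite peval_coefs_mulr // addnS -addSn; exact: IH (coefs_mulr_vanish i c0).
Qed.

Lemma evalw_lin_subst l w : w != [::] ->
  evalw mul (lin_subst l) w = peval (size w).+1 (lin_coefs w) l /\
  vanish_from (size w).+1 (lin_coefs w).
Proof.
case: w => [//|h t] _ /=.
set c1 := (fun k => if k == 0%N then _ else _).
have -> : lin_subst l h = peval 2 c1 l.
  by rewrite /peval !big_ord_recr big_ord0 /= add0r expr0 expr1 scale1r.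
have c1_vanish : vanish_from 2 c1 by move=> [|[|k]].
by have := foldl_coefs_mulr l t c1_vanish; rewrite add2n.
Qed.

Lemma foldl_coefs_mulr01 t c :
  (foldl coefs_mulr c t) 0%N = rpow mul y (size t) (c 0%N) /\
  (foldl coefs_mulr c t) 1%N = rpow mul y (size t) (c 1%N) +
     \sum_(j < size t)
       rpow mul y ((size t).-1 - j) (mul (rpow mul y j (c 0%N)) (v (nth 0%N t j))).
Proof.
elim: t c => [|i t IH] c /=; first by rewrite big_ord0 addr0.
have [-> ->] := IH (coefs_mulr c i).
rewrite /coefs_mulr /= addr0 -rpowSr; split => //.
rewrite raddfD /= -rpowSr -addrA; congr (_ + _).
rewrite big_ord_recl /= subn0; congr (_ + _).
apply: eq_bigr => j _; rewrite /bump /= add1n -rpowSr; congr (rpow _ _ _ _).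
by have := ltn_ord j; lia.
Qed.

Lemma lin_coefs1 w : w != [::] -> lin_coefs w 1%N = lin_part w.
Proof.
case: w => [//|h t] _; rewrite /lin_coefs /lin_part.
set c1 := (fun k => if k == 0%N then _ else _).
have [_ ->] := foldl_coefs_mulr01 t c1.
rewrite /= big_ord_recl /= subn0; congr (_ + _).
apply: eq_bigr => j _; rewrite (rpow_lpow_self Hmul) (mul_lpow_self Hmul) /sandwich /bump /=.
by congr (rpow _ _ _ _); have := ltn_ord j; lia.
Qed.

End Linearization.

Section LinearPart.
Variables (K : comPzRingType) (R : lmodType K) (mul : R -> R -> R).
Hypothesis Hmul : nu_assoc_alg mul.

Lemma lin_part_scale (c : K) y v w :
  lin_part mul (c *: y) v w = c ^+ (size w).-1 *: lin_part mul y v w.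
Proof.
rewrite /lin_part scaler_sumr; apply: eq_bigr => j _.
by rewrite (sandwich_scale Hmul); congr (_ ^+ _ *: _); have := ltn_ord j; lia.
Qed.

Lemma lin_part_indicator x y a w :
  lin_part mul y (fun i => (i == a)%:R *: x) w =
  \sum_(j < size w) (nth 0%N w j == a)%:R *: sandwich mul x y j ((size w).-1 - j).
Proof. by apply: eq_bigr => j _; rewrite (sandwichZ Hmul). Qed.

End LinearPart.

Lemma binomial_nontrivial_position (K : pzRingType) (a1 a2 : K) u1 u2 :
  size u1 = size u2 -> (0 < size u1)%N -> binomial_nontrivial a1 a2 u1 u2 ->
  exists2 j, (j < size u1)%N &
    exists a, a1 * (nth 0%N u1 j == a)%:R + a2 * (nth 0%N u2 j == a)%:R != 0.
Proof.
move=> sizes_eq u1_gt0; rewrite /binomial_nontrivial.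
have [<-|u12] := eqVneq u1 u2.
  by exists 0%N => //; exists (nth 0%N u1 0); rewrite eqxx !mulr1.
have [j ju1 u12j] : exists2 j, (j < size u1)%N & nth 0%N u1 j != nth 0%N u2 j.
  case: (boolP [exists j : 'I_(size u1), nth 0%N u1 j != nth 0%N u2 j]).
    by case/existsP => j; exists j.
  move/existsPn => same; case/eqP: u12; apply: (eq_from_nth (x0 := 0%N) sizes_eq) => j ju1.
  by have /negPn/eqP := same (Ordinal ju1).
case/orP => [a1_neq0 | a2_neq0]; exists j => //.
  by exists (nth 0%N u1 j); rewrite eqxx (eq_sym (nth 0%N u2 j)) (negPf u12j) mulr1 mulr0 addr0.
by exists (nth 0%N u2 j); rewrite eqxx (negPf u12j) mulr1 mulr0 add0r.
Qed.

Lemma semigroup_binomial (K : nzRingType) (R : lmodType K) (mul : R -> R -> R) :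
  semigroup_identity mul -> binomial_identity mul.
Proof.
move=> [u [v [u_neq0 v_neq0 uv uv_id]]]; exists 1, (-1), u, v; split => //.
  by rewrite /binomial_nontrivial (negPf uv) oner_neq0.
by move=> f; rewrite uv_id scale1r scaleN1r subrr.
Qed.

Section BinomialToSandwich.
Variables (K : idomainType) (R : lmodType K) (mul : R -> R -> R).
Hypothesis Hmul : nu_assoc_alg mul.
Hypothesis K_infinite : infinite_type K.
Hypothesis R_torsion_free : torsion_free R.

Definition yxy_identity : Prop :=
  exists (n : nat) (alpha : 'I_n.+1 -> K),
    (exists i, alpha i != 0) /\
    forall x y : R, \sum_(i < n.+1) alpha i *: yxy mul x y n i = 0.

Lemma binomial_lin_part a1 a2 u1 u2 : u1 != [::] -> u2 != [::] ->
  (forall f, a1 *: evalw mul f u1 + a2 *: evalw mul f u2 = 0) ->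
  forall y v, a1 *: lin_part mul y v u1 + a2 *: lin_part mul y v u2 = 0.
Proof.
move=> u1_neq0 u2_neq0 u_id y v.
pose M := (size u1 + size u2).+2.
pose c k := a1 *: lin_coefs mul y v u1 k + a2 *: lin_coefs mul y v u2 k.
rewrite -!(lin_coefs1 Hmul) //.
apply: (@peval_eq0_coef _ _ K_infinite R_torsion_free M c) => // l.
have [E1 c1_vanish] := evalw_lin_subst Hmul y v l u1_neq0.
have [E2 c2_vanish] := evalw_lin_subst Hmul y v l u2_neq0.
have le1 : ((size u1).+1 <= M)%N by rewrite /M; lia.
have le2 : ((size u2).+1 <= M)%N by rewrite /M; lia.
by rewrite pevalD !pevalZ -(peval_widen l c1_vanish le1) -(peval_widen l c2_vanish le2) -E1 -E2.
Qed.

Lemma sandwich_identity_yxy n (b : nat -> K) j0 : (j0 <= n)%N -> b j0 != 0 ->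
  (forall x y : R, \sum_(j < n.+1) b j *: sandwich mul x y j (n - j) = 0) -> yxy_identity.
Proof.
move=> j0n bj0 b_id; exists n, (fun i : 'I_n.+1 => b i); split.
  by exists (Ordinal (j0n : j0 < n.+1)%N).
by move=> x y; rewrite -[RHS](b_id x y); apply: eq_bigr => i _; rewrite (yxyE Hmul).
Qed.

Lemma lin_part_yxy (c : K) w : c != 0 -> (0 < size w)%N ->
  (forall y v, c *: lin_part mul y v w = 0) -> yxy_identity.
Proof.
move=> c_neq0 w_gt0 lin_id.
pose a := nth 0%N w 0; pose b j := c * (nth 0%N w j == a)%:R.
apply: (@sandwich_identity_yxy (size w).-1 b 0) => // [|x y]; first by rewrite /b eqxx mulr1.
rewrite -[RHS](lin_id y (fun i => (i == a)%:R *: x)) (lin_part_indicator Hmul).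
rewrite scaler_sumr (prednK w_gt0).
by apply: eq_bigr => j _; rewrite scalerA.
Qed.

Lemma lin_parts_separate a1 a2 u1 u2 : (size u1).-1 != (size u2).-1 ->
  (forall y v, a1 *: lin_part mul y v u1 + a2 *: lin_part mul y v u2 = 0) ->
  forall y v, a1 *: lin_part mul y v u1 = 0 /\ a2 *: lin_part mul y v u2 = 0.
Proof.
move=> sizes_neq lin_id y v.
set n1 := (size u1).-1; set n2 := (size u2).-1.
pose c k := (k == n1)%:R *: (a1 *: lin_part mul y v u1) +
            (k == n2)%:R *: (a2 *: lin_part mul y v u2).
have c_root l : peval (n1 + n2).+1 c l = 0.
  rewrite pevalD !peval_monomial ?ltnS ?leq_addr ?leq_addl //.
  by rewrite !scalerA ![l ^+ _ * _]mulrC -!scalerA -!(lin_part_scale Hmul) lin_id.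
have c0 := peval_eq0_coef K_infinite R_torsion_free c_root.
split.
  have := c0 n1 (leq_addr n2 n1).
  by rewrite /c eqxx (negPf sizes_neq) scale1r scale0r addr0.
have := c0 n2 (leq_addl n1 n2).
by rewrite /c eqxx eq_sym (negPf sizes_neq) scale1r scale0r add0r.
Qed.

Lemma binomial_yxy : binomial_identity mul -> yxy_identity.
Proof.
move=> [a1 [a2 [u1 [u2 [u1_neq0 u2_neq0 nontriv u_id]]]]].
have lin_id := binomial_lin_part u1_neq0 u2_neq0 u_id.
have u1_gt0 : (0 < size u1)%N by case: (u1) u1_neq0.
have u2_gt0 : (0 < size u2)%N by case: (u2) u2_neq0.
have [sizes_eq | sizes_neq] := eqVneq (size u1) (size u2).
  have [j ju1 [a coef_neq0]] := binomial_nontrivial_position sizes_eq u1_gt0 nontriv.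
  pose b j := a1 * (nth 0%N u1 j == a)%:R + a2 * (nth 0%N u2 j == a)%:R.
  apply: (@sandwich_identity_yxy (size u1).-1 b j _ coef_neq0) => [|x y].
    by rewrite -ltnS prednK.
  rewrite -[RHS](lin_id y (fun i => (i == a)%:R *: x)) !(lin_part_indicator Hmul) -sizes_eq.
  rewrite !scaler_sumr -big_split (prednK u1_gt0).
  by apply: eq_bigr => j' _; rewrite scalerDl !scalerA.
have u12 : u1 != u2 by apply: contraNneq sizes_neq => ->.
have {}sizes_neq : (size u1).-1 != (size u2).-1.
  by apply: contra sizes_neq => /eqP sizes_eq; rewrite -(prednK u1_gt0) sizes_eq prednK.
have separate := lin_parts_separate sizes_neq lin_id.
move: nontriv; rewrite /binomial_nontrivial (negPf u12) => /orP [a1_neq0 | a2_neq0].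
  by apply: (lin_part_yxy a1_neq0 u1_gt0) => y v; case: (separate y v).
by apply: (lin_part_yxy a2_neq0 u2_gt0) => y v; case: (separate y v).
Qed.

End BinomialToSandwich.

Section SandwichedEngel.
Variables (K : pzRingType) (R : lmodType K) (mul : R -> R -> R).
Hypothesis Hmul : nu_assoc_alg mul.

Definition e_annihilated (a m b : nat) : Prop :=
  forall x y : R, rpow mul y b (lpow mul y a (e_ mul x y m)) = 0.

Lemma e_annihilated_widen a m b a' b' :
  e_annihilated a m b -> (a <= a')%N -> (b <= b')%N -> e_annihilated a' m b'.
Proof.
move=> e0 aa' bb' x y.
by rewrite -(subnK aa') -(subnK bb') lpowD rpowD -(lpow_rpow Hmul) e0 !raddf0.
Qed.

Lemma e_annihilatedS a m b : e_annihilated a m b -> e_annihilated a m.+1 b.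
Proof.
move=> e0 x y; rewrite /= /comm.
rewrite -[mul (e_ mul x y m) y]/(rpow mul y 1 _) -[mul y (e_ mul x y m)]/(lpow mul y 1 _).
rewrite !raddfB /= (lpow_rpow Hmul) -rpowD -lpowD.
rewrite (e_annihilated_widen e0 (leqnn a) (leq_addr 1 b)).
by rewrite (e_annihilated_widen e0 (leq_addr 1 a) (leqnn b)) subrr.
Qed.

Lemma e_annihilated_mono a m b a' m' b' : e_annihilated a m b ->
  (a <= a')%N -> (m <= m')%N -> (b <= b')%N -> e_annihilated a' m' b'.
Proof.
move=> e0 aa' mm' bb'; apply: (e_annihilated_widen (a := a) (b := b)) => //.
by rewrite -(subnK mm'); elim: (m' - m)%N => // k IH; apply: e_annihilatedS.
Qed.

Definition sandwiched_engel_identity : Prop :=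
  exists m : nat, (1 <= m)%N /\
    forall x y : R, mul (mul (pw mul y m) (e_ mul x y m)) (pw mul y m) = 0.

Lemma pw_e_pw_annihilated m : (0 < m)%N ->
  (forall x y : R, mul (mul (pw mul y m) (e_ mul x y m)) (pw mul y m) = 0) <->
  e_annihilated m m m.
Proof. by move=> m_gt0; split=> e0 x y; move: (e0 x y); rewrite mul_pw_r // mul_pw_l. Qed.

End SandwichedEngel.

Section EngelToSemigroup.
Variables (K : comNzRingType) (R : lmodType K) (mul : R -> R -> R) (p : nat).
Hypothesis Hmul : nu_assoc_alg mul.
Hypothesis pcharKp : p \in [pchar K].

Lemma e_pchar_expn r x y :
  e_ mul x y (p ^ r) = sandwich mul x y 0 (p ^ r) - sandwich mul x y (p ^ r) 0.
Proof.
have q_gt0 := pchar_expn_gt0 pcharKp r.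
rewrite (e_expand Hmul) -(prednK q_gt0) big_ord_recl big_ord_recr /= big1 ?add0r.
  rewrite /bump /= add1n prednK // expr0 mul1r bin0 scale1r subn0.
  by rewrite (sign_pchar_expn pcharKp) binn mulr1 subnn scaleN1r.
move=> i _; rewrite prednK // (binomial_pchar_expn_eq0 pcharKp) ?mulr0 ?scale0r //= /bump /=.
by have := ltn_ord i; lia.
Qed.

Lemma e_annihilated_semigroup m : e_annihilated mul m m m -> semigroup_identity mul.
Proof.
move=> e0; set q := (p ^ m)%N.
have mq : (m <= q)%N := ltnW (ltn_pchar_expn pcharKp m).
have q_gt0 : (0 < q)%N := pchar_expn_gt0 pcharKp m.
have eq0 : e_annihilated mul q q q by apply: (e_annihilated_mono Hmul e0).
exists (nseq q 1%N ++ 0%N :: nseq (q + q) 1%N), (nseq (q + q) 1%N ++ 0%N :: nseq q 1%N).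
split; [by case: (nseq q 1%N) | by case: (nseq (q + q) 1%N) | |].
  apply/eqP => /(congr1 (nth 0%N ^~ q)).
  by rewrite !nth_cat !size_nseq ltnn subnn /= nth_nseq !ifT //; lia.
move=> f; rewrite !(evalw_nseq Hmul); apply/eqP; rewrite -subr_eq0.
have := eq0 (f 0%N) (f 1%N).
by rewrite e_pchar_expn -/q !raddfB /= !(rpow_lpow_sandwich Hmul) !addn0 => ->.
Qed.

Lemma sandwiched_engel_semigroup :
  sandwiched_engel_identity mul -> semigroup_identity mul.
Proof.
move=> [m [m_gt0 engel]].
exact/e_annihilated_semigroup/(pw_e_pw_annihilated Hmul m_gt0).
Qed.

End EngelToSemigroup.

Section Perturbation.
Variables (K : comPzRingType) (R : lmodType K) (mul : R -> R -> R).
Hypothesis Hmul : nu_assoc_alg mul.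

Definition perturb (y : R) (l : K) : R := y + l *: mul y y.

Lemma lpow_perturb y l i v : lpow mul (perturb y l) i v =
  \sum_(a < i.+1) ('C(i, a)%:R * l ^+ a) *: lpow mul y (i + a) v.
Proof.
elim: i v => [|i IH] v; first by rewrite big_ord1 /= bin0 expr0 mulr1 scale1r.
rewrite lpowS IH (mulmDl Hmul) (mulmZl Hmul) !(mulm_sumr Hmul).
rewrite [in RHS]big_ord_recl /= bin0 expr0 mulr1 scale1r.
under [X in _ = _ + X]eq_bigr do rewrite /bump /= binS natrD mulrDl scalerDl.
rewrite big_split /= addrA; congr (_ + _).
  rewrite big_ord_recl /= bin0 expr0 mulr1 scale1r addn0 -lpowS.
  rewrite [in RHS]big_ord_recr /= bin_small // mul0r scale0r addr0 addn0; congr (_ + _).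
  apply: eq_bigr => a _; rewrite (mulmZr Hmul) -lpowS /bump /=.
  by congr (_ *: lpow _ _ _ _); lia.
rewrite scaler_sumr; apply: eq_bigr => a _.
rewrite (mulmZr Hmul) -(mulmA Hmul) -!lpowS scalerA add1n exprS mulrCA.
by congr (_ *: lpow _ _ _ _); lia.
Qed.

Lemma rpow_perturb y l j v : rpow mul (perturb y l) j v =
  \sum_(b < j.+1) ('C(j, b)%:R * l ^+ b) *: rpow mul y (j + b) v.
Proof.
elim: j v => [|j IH] v; first by rewrite big_ord1 /= bin0 expr0 mulr1 scale1r.
rewrite rpowS IH (mulmDr Hmul) (mulmZr Hmul) !(mulm_suml Hmul).
rewrite [in RHS]big_ord_recl /= bin0 expr0 mulr1 scale1r.
under [X in _ = _ + X]eq_bigr do rewrite /bump /= binS natrD mulrDl scalerDl.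
rewrite big_split /= addrA; congr (_ + _).
  rewrite big_ord_recl /= bin0 expr0 mulr1 scale1r addn0 -rpowS.
  rewrite [in RHS]big_ord_recr /= bin_small // mul0r scale0r addr0 addn0; congr (_ + _).
  apply: eq_bigr => b _; rewrite (mulmZl Hmul) -rpowS /bump /=.
  by congr (_ *: rpow _ _ _ _); lia.
rewrite scaler_sumr; apply: eq_bigr => b _.
rewrite (mulmZl Hmul) (mulmA Hmul) -!rpowS scalerA add1n exprS mulrCA.
by congr (_ *: rpow _ _ _ _); lia.
Qed.

Lemma sandwich_perturb x y l i j N : (i < N)%N -> (j < N)%N ->
  sandwich mul x (perturb y l) i j = \sum_(a < N) \sum_(b < N)
    (l ^+ (a + b) * ('C(i, a)%:R * 'C(j, b)%:R)) *: sandwich mul x y (i + a) (j + b).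
Proof.
move=> iN jN.
have lpowE : lpow mul (perturb y l) i x =
    \sum_(a < N) ('C(i, a)%:R * l ^+ a) *: lpow mul y (i + a) x.
  rewrite lpow_perturb.
  rewrite (sum_ord_widen (F := fun a => ('C(i, a)%:R * l ^+ a) *: lpow mul y (i + a) x) iN) //.
  by move=> a /andP [ia _]; rewrite bin_small // mul0r scale0r.
have rpowE v : rpow mul (perturb y l) j v =
    \sum_(b < N) ('C(j, b)%:R * l ^+ b) *: rpow mul y (j + b) v.
  rewrite rpow_perturb.
  rewrite (sum_ord_widen (F := fun b => ('C(j, b)%:R * l ^+ b) *: rpow mul y (j + b) v) jN) //.
  by move=> b /andP [jb _]; rewrite bin_small // mul0r scale0r.
rewrite /sandwich lpowE rpowE.
under eq_bigr do rewrite raddf_sum /= scaler_sumr.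
rewrite exchange_big /=; apply: eq_bigr => a _; apply: eq_bigr => b _.
by rewrite linearZ /= scalerA exprD; congr (_ *: _); ring.
Qed.

End Perturbation.

Section SandwichToEngel.
Variables (K : idomainType) (R : lmodType K) (mul : R -> R -> R) (p : nat).
Hypothesis Hmul : nu_assoc_alg mul.
Hypothesis K_infinite : infinite_type K.
Hypothesis R_torsion_free : torsion_free R.
Hypothesis pcharKp : p \in [pchar K].

Lemma sandwich_identity_perturb n d (beta : nat -> K) : (n <= d)%N ->
  (forall x y, \sum_(i < n.+1) beta i *: sandwich mul x y i (d - i) = 0) ->
  forall x y e, (e <= d)%N ->
  \sum_(a < e.+1) \sum_(i < n.+1) (beta i * ('C(i, a)%:R * 'C(d - i, e - a)%:R)) *:
    sandwich mul x y (i + a) (d - i + (e - a)) = 0.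
Proof.
move=> nd beta_id x y e ed.
pose c a b := \sum_(i < n.+1) (beta i * ('C(i, a)%:R * 'C(d - i, b)%:R)) *:
  sandwich mul x y (i + a) (d - i + b).
apply: (@peval2_eq0_diag _ _ K_infinite R_torsion_free d.+1 c) => // l.
rewrite -[RHS](beta_id x (perturb mul y l)).
have perturbE (i : 'I_n.+1) : beta i *: sandwich mul x (perturb mul y l) i (d - i) =
    \sum_(a < d.+1) \sum_(b < d.+1) l ^+ (a + b) *:
      ((beta i * ('C(i, a)%:R * 'C(d - i, b)%:R)) *: sandwich mul x y (i + a) (d - i + b)).
  have i_lt : (i < d.+1)%N by have := ltn_ord i; lia.
  rewrite (sandwich_perturb Hmul x y l i_lt (leq_subr i d : d - i < d.+1)%N).
  rewrite scaler_sumr; apply: eq_bigr => a _; rewrite scaler_sumr; apply: eq_bigr => b _.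
  by rewrite !scalerA mulrCA.
rewrite (eq_bigr _ (fun i _ => perturbE i)) [RHS]exchange_big /=; apply: eq_bigr => a _.
by rewrite [RHS]exchange_big /=; apply: eq_bigr => b _; rewrite /c scaler_sumr.
Qed.

Lemma sandwich_diag_coef n e r a (beta : nat -> K) x y :
  (a <= e <= n)%N -> (n < p ^ r)%N -> (forall i, (e < i <= n)%N -> beta i = 0) ->
  \sum_(i < n.+1) (beta i * ('C(i, a)%:R * 'C(e + (p ^ r).-1 - i, e - a)%:R)) *:
    sandwich mul x y (i + a) (e + (p ^ r).-1 - i + (e - a)) =
  (beta e * ('C(e, a)%:R * (-1) ^+ (e - a))) *: sandwich mul x y (e + a) ((p ^ r).-1 + (e - a)).
Proof.
move=> /andP [ae en] nq beta_top; have e_lt : (e < n.+1)%N by [].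
rewrite (bigD1 (Ordinal e_lt)) //= big1 ?addr0 => [|i /negbTE i_neq_e].
  rewrite (_ : e + (p ^ r).-1 - e = (p ^ r).-1)%N; last by lia.
  by rewrite (binomial_pchar_predn_expn pcharKp) //; lia.
have {}i_neq_e : nat_of_ord i != e by rewrite -(inj_eq val_inj) in i_neq_e; rewrite i_neq_e.
case: ltngtP i_neq_e => // [ie | ei] _.
  have [ai | ia] := leqP a i; last by rewrite bin_small // mul0r mulr0 scale0r.
  rewrite (_ : e + (p ^ r).-1 - i = (p ^ r).-1 + (e - i))%N; last by lia.
  by rewrite (binomial_pchar_prednD_expn_eq0 pcharKp) ?mulr0 ?scale0r //; lia.
by rewrite beta_top ?mul0r ?scale0r // ei -ltnS ltn_ord.
Qed.

Lemma sandwich_identity_e_annihilated n e r (beta : nat -> K) :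
  (e <= n)%N -> (n < p ^ r)%N -> beta e != 0 -> (forall i, (e < i <= n)%N -> beta i = 0) ->
  (forall x y, \sum_(i < n.+1) beta i *: sandwich mul x y i (n - i) = 0) ->
  e_annihilated mul e e (p ^ r).-1.
Proof.
move=> en nq beta_neq0 beta_top beta_id x y.
set q := (p ^ r)%N.
set d := (e + q.-1)%N.
have beta_id_d x' y' : \sum_(i < n.+1) beta i *: sandwich mul x' y' i (d - i) = 0.
  transitivity (rpow mul y' (d - n) (\sum_(i < n.+1) beta i *: sandwich mul x' y' i (n - i))).
    rewrite raddf_sum /=; apply: eq_bigr => i _; rewrite linearZ /= /sandwich -rpowD.
    by congr (_ *: rpow _ _ _ _); have := ltn_ord i; lia.
  by rewrite beta_id raddf0.
have nd : (n <= d)%N by rewrite /d; lia.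
have ed : (e <= d)%N by rewrite /d; lia.
have aen (a : 'I_e.+1) : (a <= e <= n)%N by rewrite -ltnS ltn_ord.
have := sandwich_identity_perturb nd beta_id_d x y ed.
rewrite (eq_bigr _ (fun (a : 'I_e.+1) _ => sandwich_diag_coef x y (aen a) nq beta_top)).
have signE (a : 'I_e.+1) : beta e * ('C(e, a)%:R * (-1) ^+ (e - a)) =
    (beta e * (-1) ^+ e) * ((-1) ^+ a * 'C(e, a)%:R).
  case: a => a /=; rewrite ltnS => ae.
  have -> : (-1) ^+ (e - a) = (-1) ^+ e * (-1) ^+ a :> K.
    by rewrite -[in RHS](subnK ae) exprD -mulrA -expr2 sqrr_sign mulr1.
  by ring.
under eq_bigr do rewrite signE -scalerA.
rewrite -scaler_sumr -(rpow_lpow_e Hmul) => /R_torsion_free [/eqP|//].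
by rewrite mulf_eq0 signr_eq0 orbF (negPf beta_neq0).
Qed.

Lemma yxy_sandwiched_engel : yxy_identity mul -> sandwiched_engel_identity mul.
Proof.
move=> [n [alpha [[i0 alpha_i0] alpha_id]]].
pose beta k := alpha (inord k).
have beta_id x y : \sum_(i < n.+1) beta i *: sandwich mul x y i (n - i) = 0.
  by rewrite -[RHS](alpha_id x y); apply: eq_bigr => i _; rewrite /beta inord_val (yxyE Hmul).
have beta_nz : exists k, (k <= n)%N && (beta k != 0).
  by exists i0; rewrite -ltnS ltn_ord /beta inord_val.
have beta_ub k : (k <= n)%N && (beta k != 0) -> (k <= n)%N by case/andP.
case: (ex_maxnP beta_nz beta_ub) => e /andP [en beta_neq0] e_max.
have beta_top i : (e < i <= n)%N -> beta i = 0.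
  case/andP=> ei i_n; apply/eqP; apply: contraTT ei => beta_i.
  by rewrite -leqNgt e_max // i_n beta_i.
have nq : (n < p ^ n)%N := ltn_pchar_expn pcharKp n.
have e0 := sandwich_identity_e_annihilated en nq beta_neq0 beta_top beta_id.
exists (p ^ n)%N; split; first by lia.
by apply/(pw_e_pw_annihilated Hmul); [lia | apply: (e_annihilated_mono Hmul e0); lia].
Qed.

End SandwichToEngel.

Theorem theorem1p3 (K : idomainType) (R : lmodType K) (mul : R -> R -> R) :
  infinite_type K ->
  (exists p : nat, (0 < p)%N /\ p \in [pchar K]) ->
  nu_assoc_alg mul ->
  torsion_free R ->
  (semigroup_identity mul <-> binomial_identity mul)
  /\ (binomial_identity mul <->
      exists (n : nat) (alpha : 'I_n.+1 -> K),
        (exists i, alpha i != 0) /\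
        forall x y : R, \sum_(i < n.+1) alpha i *: yxy mul x y n i = 0)
  /\ ((exists (n : nat) (alpha : 'I_n.+1 -> K),
        (exists i, alpha i != 0) /\
        forall x y : R, \sum_(i < n.+1) alpha i *: yxy mul x y n i = 0) <->
      exists m : nat, (1 <= m)%N /\
        forall x y : R, mul (mul (pw mul y m) (e_ mul x y m)) (pw mul y m) = 0).
Proof.
move=> K_infinite [p [_ pcharKp]] Hmul R_torsion_free.
have i_ii := @semigroup_binomial K R mul.
have ii_iii := binomial_yxy Hmul K_infinite R_torsion_free.
have iii_iv := yxy_sandwiched_engel Hmul K_infinite R_torsion_free pcharKp.
have iv_i := sandwiched_engel_semigroup Hmul pcharKp.
split; [split | split; split] => H.
- exact: i_ii.
- exact: iv_i (iii_iv (ii_iii H)).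
- exact: ii_iii.
- exact: i_ii (iv_i (iii_iv H)).
- exact: iii_iv.
- exact: ii_iii (i_ii (iv_i H)).
Qed.
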